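(* Fix $\ell\geq2$, let $A=\ell\times\omega$, and fix a recursive bijection $\psi:(\ell-1)\times\omega\times\omega\to\omega$. For $\alpha\in\{0,1\}^\omega$ define $S_\alpha$ on $A$ by: $S_\alpha(a,b)$ holds iff $a=(i,n)$, $b=(i+1,m)$ for some $i<\ell-1$ with $\alpha_{\psi(i,n,m)}=1$. Let $G$ be the set of $\alpha$ such that $\langle A,S_\alpha,\{0\}\times\omega,\ldots,\{\ell-1\}\times\omega\rangle$ is a model of $T_\ell$. Then $\lambda(G)=1$, i.e. with probability $1$ a sequence $\alpha$ defines a generic $\ell$-diagram.
   Context: $\lambda$ is the uniform (fair-coin product) probability measure on $\{0,1\}^\omega$, under which the bits $\alpha_i$ are independent and each equals $1$ with probability $1/2$. The signature has unary relations $L_0,\ldots,L_{\ell-1}$ and binary $S$. The theory $T_\ell$: (i) every $x$ satisfies some $L_j(x)$; (ii) no $x$ satisfies $L_i(x)\wedge L_j(x)$ for $i<j$; (iii) $S(x,y)$ and $L_i(x)$ with $i\le\ell-2$ imply $L_{i+1}(y)$; (iv) for each $i<\ell$ and all finite $X,Y\subseteq L_{i+1}$ with $X\cap Y=\emptyset$, $Z\subseteq L_i$, $X',Y'\subseteq L_{i-1}$ with $X'\cap Y'=\emptyset$ ($L_{-1},L_\ell$ read as empty), there is $z\in L_i\setminus Z$ with $S(z,x)$ for $x\in X$, $S(x',z)$ for $x'\in X'$, $\neg S(z,y)$ for $y\in Y$, $\neg S(y',z)$ for $y'\in Y'$. Countable models of $T_\ell$ are called generic $\ell$-diagrams. *)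

From HB Require Import structures.
From mathcomp Require Import all_boot all_order all_algebra.
From mathcomp Require Import all_classical all_reals all_analysis.
Set Implicit Arguments. Unset Strict Implicit. Unset Printing Implicit Defensive.
Import Order.TTheory GRing.Theory Num.Theory.
Local Open Scope classical_set_scope.
Local Open Scope ring_scope.

Definition cylinder (s : seq bool) : set cantor_space :=
  [set a : cantor_space | forall i, (i < size s)%N -> a i = nth false s i].

Definition cylinders : set (set cantor_space) := range cylinder.

(* {0,1}^omega with the sigma-algebra generated by the cylinders
   (= the Borel sigma-algebra of the Cantor space) *)
Definition CantorM : Type := g_sigma_algebraType cylinders.

(* P is the uniform (fair-coin product) measure: the bits are independent
   and each equals 1 with probability 1/2, i.e. every cylinder of length n
   has measure 2^-n.  This determines the measure uniquely on CantorM. *)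
Definition fair_coin (R : realType)
    (P : probability CantorM R) : Prop :=
  forall s : seq bool, P (cylinder s) = ((2%:R : R) ^- size s)%:E.

(* L_{i+1}, read as empty when i+1 = l *)
Definition Lup (l : nat) {U : Type} (L : nat -> set U) (i : nat) : set U :=
  [set x | (i.+1 < l)%N /\ L i.+1 x].
(* L_{i-1}, read as empty when i = 0 *)
Definition Ldown {U : Type} (L : nat -> set U) (i : nat) : set U :=
  [set x | (0 < i)%N /\ L i.-1 x].

(* <U, S, L_0, ..., L_{l-1}> is a model of T_l (only L j with j < l is part
   of the signature; L j for j >= l is never used) *)
Definition model_T (l : nat) {U : Type} (L : nat -> set U)
    (S : U -> U -> Prop) : Prop :=
  [/\ (forall x, exists2 j, (j < l)%N & L j x),
      (forall x i j, (i < j)%N -> (j < l)%N -> ~ (L i x /\ L j x)),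
      (forall x y i, (i <= l - 2)%N -> S x y -> L i x -> L i.+1 y) &
      (* (iv) *)
      (forall i, (i < l)%N ->
        forall X Y Z X' Y' : set U,
          finite_set X -> finite_set Y -> finite_set Z ->
          finite_set X' -> finite_set Y' ->
          X `<=` Lup l L i -> Y `<=` Lup l L i -> X `&` Y = set0 ->
          Z `<=` L i ->
          X' `<=` Ldown L i -> Y' `<=` Ldown L i -> X' `&` Y' = set0 ->
          exists z, [/\ L i z, ~ Z z,
            (forall x, X x -> S z x) /\ (forall x', X' x' -> S x' z),
            (forall y, Y y -> ~ S z y) & (forall y', Y' y' -> ~ S y' z)])].

Definition Lstd (l : nat) (j : nat) : set ('I_l * nat) :=
  [set a | nat_of_ord a.1 = j].

Definition S_alpha (l : nat) (psi : 'I_l.-1 * nat * nat -> nat)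
    (alpha : nat -> bool) (a b : 'I_l * nat) : Prop :=
  exists i : 'I_l.-1,
    [/\ nat_of_ord a.1 = nat_of_ord i, nat_of_ord b.1 = (nat_of_ord i).+1 &
        alpha (psi (i, a.2, b.2)) = true].

Definition Ggen (l : nat) (psi : 'I_l.-1 * nat * nat -> nat) : set CantorM :=
  [set alpha : CantorM |
     model_T l (@Lstd l) (S_alpha psi (alpha : cantor_space))].

From HB Require Import structures.
From mathcomp Require Import all_boot all_order all_algebra.
From mathcomp Require Import all_classical all_reals all_analysis.
From mathcomp Require Import lra.
Set Implicit Arguments. Unset Strict Implicit. Unset Printing Implicit Defensive.
Import Order.TTheory GRing.Theory Num.Theory.
Local Open Scope classical_set_scope.
Local Open Scope ring_scope.

(* G is the countable intersection of the events "some node (i, n)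
   with n >= N is joined to the first N nodes of the levels i + 1 and i - 1
   according to prescribed patterns": these are instances of axiom (iv), and
   conversely every instance of (iv) follows from one of them because finite
   sets of nodes are bounded.  Such an event holds as soon as a block of at most
   2N bits attached to some n >= N takes prescribed values, and for large n that
   block lies beyond any given finite prefix.  An event determined by a finite
   prefix keeps at least the fraction 2^-2N of its mass when a block of bits
   beyond that prefix is prescribed; iterating, the complement of the event has
   probability at most (1 - 2^-2N)^j for every j, hence 0. *)

Definition agree (f : nat -> bool) (ps : seq nat) : set CantorM :=
  [set a | {in ps, forall p, a p = f p}].

Definition prefix_determined (M : nat) (E : set CantorM) : Prop :=
  forall a b : CantorM, (forall p, (p < M)%N -> a p = b p) -> E a -> E b.

Lemma cylinder_measurable w : measurable (cylinder w : set CantorM).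
Proof. by apply: sub_sigma_algebra; exists w. Qed.

Lemma bit_measurable p b : measurable [set a : CantorM | a p = b].
Proof.
have -> : [set a : CantorM | a p = b] =
    \bigcup_(w : p.-tuple bool) cylinder (rcons w b).
  apply/seteqP; split=> [a /= ab|a [w _ wa]]; last first.
    have := wa p; rewrite size_rcons size_tuple nth_rcons size_tuple ltnn eqxx.
    by apply.
  exists [tuple a i | i < p] => // i.
  rewrite size_rcons size_tuple ltnS nth_rcons size_tuple leq_eqVlt.
  case/orP=> [/eqP->|ip]; first by rewrite ltnn eqxx.
  by rewrite ip -[i]/(val (Ordinal ip)) nth_mktuple.
exact: countable_bigcupT_measurable (countableP _) (fun w => cylinder_measurable _).
Qed.

Lemma agree_measurable f ps : measurable (agree f ps).
Proof.
have -> : agree f ps = \bigcap_(p in [set p | p \in ps]) [set a | a p = f p].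
  by apply/seteqP; split=> a /= h p; apply: h.
by apply: bigcap_measurableType => p _; exact: bit_measurable.
Qed.

Lemma prefix_determined_le M M' E :
  (M <= M')%N -> prefix_determined M E -> prefix_determined M' E.
Proof. by move=> MM' dE a b ab; apply: dE => p pM; apply: ab (leq_trans pM MM'). Qed.

Lemma prefix_determinedI M E F :
  prefix_determined M E -> prefix_determined M F -> prefix_determined M (E `&` F).
Proof. by move=> dE dF a b ab [Ea Fa]; split; [exact: dE ab Ea|exact: dF ab Fa]. Qed.

Lemma prefix_determinedC M E :
  prefix_determined M E -> prefix_determined M (~` E).
Proof. by move=> dE a b ab nEa Eb; apply/nEa/(dE b) => // p /ab. Qed.

Lemma prefix_determined_agree f ps :
  prefix_determined (\max_(p <- ps) p.+1) (agree f ps).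
Proof.
move=> a b ab Aa p pps; rewrite -ab ?Aa //.
exact: (leq_bigmax_seq _ pps).
Qed.

Lemma cylinder_sub_or_disjoint (w : seq bool) (E : set CantorM) :
  prefix_determined (size w) E -> cylinder w `<=` E \/ cylinder w `&` E = set0.
Proof.
move=> dE; have [[a [wa Ea]]|none] := pselect (exists a, cylinder w a /\ E a).
  by left=> b wb; apply: (dE a) Ea => p pw; rewrite wa ?wb.
by right; apply/seteqP; split=> // a [wa Ea]; apply: none; exists a.
Qed.

Lemma cylinder_rcons w :
  cylinder w = cylinder (rcons w false) `|` cylinder (rcons w true).
Proof.
apply/seteqP; split=> [a wa|a]; last first.
  case=> wa i iw; have := wa i;
    by rewrite size_rcons nth_rcons iw ltnS ltnW //; apply.
have ext i : (i < size (rcons w (a (size w))))%N ->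
    a i = nth false (rcons w (a (size w))) i.
  rewrite size_rcons ltnS nth_rcons leq_eqVlt.
  by case/orP=> [/eqP->|iw]; [rewrite ltnn eqxx|rewrite iw wa].
by case: (a (size w)) ext => ext; [right|left].
Qed.

Lemma cylinder_rcons_disjoint w :
  cylinder (rcons w false) `&` cylinder (rcons w true) = set0.
Proof.
apply/seteqP; split=> // a [/(_ (size w)) hf /(_ (size w)) ht].
move: hf ht; rewrite !size_rcons !nth_rcons ltnn eqxx ltnSn.
by move=> /(_ isT) -> /(_ isT).
Qed.

Section countable_bigcap.
Context d (T : measurableType d) (R : realType) (P : probability T R).

Lemma countable_bigcapT_measurable (I : countType) (A : I -> set T) :
  (forall i, measurable (A i)) -> measurable (\bigcap_i A i).
Proof.
move=> mA; rewrite -[X in measurable X]setCK setC_bigcap; apply: measurableC.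
exact: countable_bigcupT_measurable (countableP _) (fun i => measurableC (mA i)).
Qed.

Lemma probability_countable_bigcap (I : countType) (A : I -> set T) :
  (forall i, measurable (A i)) -> (forall i, P (~` A i) = 0%E) ->
  P (\bigcap_i A i) = 1%E.
Proof.
move=> mA nA; have mC := measurableC (countable_bigcapT_measurable mA).
have nC : P (~` \bigcap_i A i) = 0%E.
  apply/negligibleP => //.
  apply: (@negligibleS _ _ _ _
    (\bigcup_n if unpickle n is Some i then ~` A i else set0)).
    rewrite setC_bigcap => a [i _ Aia]; exists (pickle i) => //.
    by rewrite pickleK.
  apply: negligible_bigcup => n.
  case: (unpickle n) => [i|]; last exact: negligible_set0.
  exact/negligibleP/nA/measurableC.
by rewrite -[X in P X]setCK probability_setC // nC sube0.
Qed.

End countable_bigcap.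

Section fair_coin.
Variables (R : realType) (P : probability CantorM R).
Hypothesis fairP : fair_coin P.

Definition pr (A : set CantorM) : R := fine (P A).

Local Notation half := (2^-1 : R).

Lemma prE A : measurable A -> P A = (pr A)%:E.
Proof. by move=> mA; rewrite /pr fineK // fin_num_measure. Qed.

Lemma pr_ge0 A : measurable A -> 0 <= pr A.
Proof. by move=> mA; rewrite -lee_fin -prE. Qed.

Lemma le_pr A B : measurable A -> measurable B -> A `<=` B -> pr A <= pr B.
Proof. by move=> mA mB AB; rewrite -lee_fin -!prE // le_measure ?inE. Qed.

Lemma prU A B : measurable A -> measurable B -> A `&` B = set0 ->
  pr (A `|` B) = pr A + pr B.
Proof.
move=> mA mB AB; apply/EFin_inj; rewrite EFinD -!prE //; last exact: measurableU.
exact: measureU.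
Qed.

Lemma pr_setIC A B : measurable A -> measurable B ->
  pr A = pr (A `&` B) + pr (A `&` ~` B).
Proof.
move=> mA mB; have mAC : measurable (A `&` ~` B) by exact/measurableI/measurableC.
rewrite -prU -?setIUr ?setUv ?setIT //; first exact: measurableI.
by rewrite setIACA setICr !setI0.
Qed.

Lemma pr_cylinder w : pr (cylinder w) = half ^+ size w.
Proof. by rewrite /pr fairP exprVn. Qed.

Lemma pr_cylinder_rcons w (A : set CantorM) : measurable A ->
  pr (cylinder w `&` A) =
  pr (cylinder (rcons w false) `&` A) + pr (cylinder (rcons w true) `&` A).
Proof.
move=> mA; have mwA w' : measurable (cylinder w' `&` A : set CantorM).
  exact: measurableI (cylinder_measurable _) mA.
rewrite -prU -?setIUl -?cylinder_rcons //.
by rewrite setIACA cylinder_rcons_disjoint set0I.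
Qed.

Lemma halfX_le m n : (m <= n)%N -> half ^+ n <= half ^+ m.
Proof. by move=> mn; rewrite ler_wiXn2l // ?invr_ge0 ?invf_le1 ?ler1n. Qed.

Lemma halfXS_double n : half ^+ n.+1 + half ^+ n.+1 = half ^+ n.
Proof. by rewrite exprS -mulrDl [_ + _](_ : _ = 1) ?mul1r //; lra. Qed.

Lemma count_leq_split n (s : seq nat) :
  count (leq n) s = (count (leq n.+1) s + count_mem n s)%N.
Proof. by elim: s => //= p s ->; case: ltngtP => _; rewrite ?addnS ?addSn. Qed.

Lemma pr_cylinder_agree_ge f (ps : seq nat) (w : seq bool) :
  {in ps, forall p, (p < size w)%N -> nth false w p = f p} ->
  half ^+ (size w + count (leq (size w)) ps) <= pr (cylinder w `&` agree f ps).
Proof.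
have mIA w' : measurable (cylinder w' `&` agree f ps : set CantorM).
  exact: measurableI (cylinder_measurable _) (agree_measurable _ _).
have [T psT] : exists T, {in ps, forall p, (p < T)%N}.
  by exists (\max_(p <- ps) p.+1) => p pps; exact: (leq_bigmax_seq _ pps).
suff : forall d w, (T <= size w + d)%N ->
    {in ps, forall p, (p < size w)%N -> nth false w p = f p} ->
    half ^+ (size w + count (leq (size w)) ps) <= pr (cylinder w `&` agree f ps).
  by move/(_ T w (leq_addl _ _)); apply.
elim=> [|d IH] {}w Tw wf.
  rewrite setIidl ?pr_cylinder ?halfX_le ?leq_addr // => a wa p pps.
  by rewrite wa ?wf //; apply: leq_trans (psT p pps) _; rewrite -(addn0 (size w)).
have ext b : (size w \in ps -> b = f (size w)) ->
    half ^+ ((size w).+1 + count (leq (size w).+1) ps) <=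
    pr (cylinder (rcons w b) `&` agree f ps).
  move=> bf; rewrite -(size_rcons w b); apply: IH; first by rewrite size_rcons addSnnS.
  move=> p pps; rewrite size_rcons ltnS nth_rcons leq_eqVlt.
  by case/orP=> [/eqP pw|pw]; [rewrite pw ltnn eqxx bf // -pw|rewrite pw wf].
have ge0 b : 0 <= pr (cylinder (rcons w b) `&` agree f ps).
  exact: pr_ge0 (mIA _).
rewrite (count_leq_split (size w)) pr_cylinder_rcons; last exact: agree_measurable.
have [wps|wps] := boolP (size w \in ps).
  have le : half ^+ (size w + (count (leq (size w).+1) ps + count_mem (size w) ps))
      <= half ^+ ((size w).+1 + count (leq (size w).+1) ps).
    rewrite halfX_le // addSnnS leq_add2l -addn1 leq_add2l.
    by rewrite -has_count has_pred1.
  move: (ext _ (fun _ => erefl)) (ge0 false) (ge0 true).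
  by case: (f (size w)) => /=; lra.
rewrite (count_memPn wps) addn0 -halfXS_double -addSn.
by apply: lerD; apply: ext; rewrite (negbTE wps).
Qed.

Lemma pr_agree_indep_ge M E f (ps : seq nat) :
  measurable E -> prefix_determined M E -> {in ps, forall p, (M <= p)%N} ->
  half ^+ size ps * pr E <= pr (E `&` agree f ps).
Proof.
move=> mE dE psM.
have mEA : measurable (E `&` agree f ps).
  exact: measurableI mE (agree_measurable _ _).
suff : forall d w, (size w + d)%N = M ->
    half ^+ size ps * pr (cylinder w `&` E) <=
    pr (cylinder w `&` (E `&` agree f ps)).
  move/(_ M [::] (add0n M)).
  by rewrite (_ : cylinder [::] = setT) ?setTI //; apply/seteqP.
elim=> [|d IH] w; last first.
  move=> wM; rewrite (pr_cylinder_rcons _ mE) (pr_cylinder_rcons _ mEA) mulrDr.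
  by apply: lerD; apply: IH; rewrite size_rcons addSnnS.
rewrite addn0 => wM; subst M; have [wE|wE0] := cylinder_sub_or_disjoint dE.
  rewrite setIA !(setIidl wE) pr_cylinder -exprD addnC.
  have := @pr_cylinder_agree_ge f ps w; rewrite (eq_in_count psM) count_predT.
  by apply=> p /psM; rewrite leqNgt => /negbTE->.
by rewrite setIA wE0 set0I /pr measure0 mulr0.
Qed.

Lemma pr_setD_agree_le M E f (ps : seq nat) :
  measurable E -> prefix_determined M E -> {in ps, forall p, (M <= p)%N} ->
  pr (E `&` ~` agree f ps) <= (1 - half ^+ size ps) * pr E.
Proof.
move=> mE dE psM; have := pr_agree_indep_ge f mE dE psM.
by rewrite (pr_setIC mE (agree_measurable f ps)); lra.
Qed.

Lemma le0_of_le_geometric (x q : R) :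
  0 < q -> q <= 1 -> (forall j, x <= (1 - q) ^+ j) -> x <= 0.
Proof.
move=> q0 q1 xq; rewrite leNgt; apply/negP => x0.
have q1' : `|1 - q| < 1 by rewrite ger0_norm ?subr_ge0 // ltrBlDr ltrDl.
have [N _ /(_ N (leqnn N))] := cvgr_lt _ (cvg_expr q1') _ x0.
by rewrite /= ltNge xq.
Qed.

Lemma null_of_avoiding_far_patterns (F : set CantorM) K : measurable F ->
  (forall M, exists f (ps : seq nat),
    [/\ (size ps <= K)%N, {in ps, forall p, (M <= p)%N} &
         F `&` agree f ps = set0]) ->
  P F = 0%E.
Proof.
move=> mF avoid; pose q := half ^+ K.
have q0 : 0 < q by rewrite exprn_gt0 // invr_gt0.
have q1 : q <= 1 by rewrite -(expr0 half) halfX_le.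
have shrink j : exists M E,
    [/\ measurable E, prefix_determined M E, F `<=` E & pr E <= (1 - q) ^+ j].
  elim: j => [|j [M [E [mE dE FE pE]]]].
    by exists 0%N, setT; split=> //; rewrite /pr probability_setT expr0.
  have [f [ps [psK psM Fps]]] := avoid M.
  exists (maxn M (\max_(p <- ps) p.+1)), (E `&` ~` agree f ps); split.
  - exact: measurableI mE (measurableC (agree_measurable f ps)).
  - apply: prefix_determinedI; apply: prefix_determined_le.
    + exact: leq_maxl.
    + exact: dE.
    + exact: leq_maxr.
    + exact/prefix_determinedC/prefix_determined_agree.
  - move=> a Fa; split; first exact: FE.
    by move=> Aa; rewrite -[False]/(set0 a) -Fps.
  apply: le_trans (pr_setD_agree_le f mE dE psM) _; rewrite exprS.
  apply: ler_pM; [|exact: pr_ge0| |exact: pE].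
  - by rewrite subr_ge0 -(expr0 half) halfX_le.
  - by rewrite lerD2l lerN2 halfX_le.
have F0 : pr F <= 0.
  apply: le0_of_le_geometric q0 q1 _ => j.
  have [M [E [mE _ FE pE]]] := shrink j.
  exact: le_trans (le_pr mF mE FE) pE.
by rewrite prE //; congr (_%:E); apply/eqP; rewrite eq_le F0 pr_ge0.
Qed.

End fair_coin.

Lemma finite_set_ub (T : choiceType) (A : set T) (f : T -> nat) :
  finite_set A -> exists N, forall x, A x -> (f x < N)%N.
Proof.
move=> /finite_fsetP[F ->].
exists (\max_(x <- finmap.enum_fset F) (f x).+1) => x xF.
exact: (leq_bigmax_seq _ xF).
Qed.

Section diagram.
Context {k : nat} {psi : 'I_k.+1 * nat * nat -> nat}.
Context {g : nat -> 'I_k.+1 * nat * nat} (psiK : cancel psi g).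

Local Notation node := ('I_k.+2 * nat)%type.

(* The bits alpha_psi(i, n, m) and alpha_psi(i - 1, m, n), m < N, decide the edges
   between the node (i, n) and the first N nodes of the levels i + 1 and i - 1.
   In the event [extension_event (i, N, s, t)] these edges follow the patterns
   s and t for some n >= N; [pattern_bit] recovers through g which entry of s or
   t a bit position must carry. *)
Definition adjacency_bits (i : 'I_k.+2) (N n : nat) : seq nat :=
  (if (i < k.+1)%N then [seq psi (inord i, n, m) | m <- iota 0 N] else [::]) ++
  (if (0 < i)%N then [seq psi (inord i.-1, m, n) | m <- iota 0 N] else [::]).

Definition pattern_bit (i : nat) (s t : seq bool) (p : nat) : bool :=
  let: (j, x, y) := g p in if val j == i then nth false s y else nth false t x.

Definition extension_event (q : 'I_k.+2 * nat * seq bool * seq bool)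
    : set CantorM :=
  let: (i, N, s, t) := q in
  [set a | exists2 n, (N <= n)%N &
             agree (pattern_bit i s t) (adjacency_bits i N n) a].

Lemma mem_adjacency_bits i N n p : p \in adjacency_bits i N n ->
  exists2 m, (m < N)%N & ((i < k.+1)%N /\ p = psi (inord i, n, m)) \/
                         ((0 < i)%N /\ p = psi (inord i.-1, m, n)).
Proof.
rewrite mem_cat => /orP[]; case: ifP => // hi /mapP[m];
  rewrite mem_iota add0n => /andP[_ mN] ->; exists m => //; [left|right]; by split.
Qed.

Lemma agree_adjacency_bitsP (i : 'I_k.+2) N n s t (a : CantorM) :
  agree (pattern_bit i s t) (adjacency_bits i N n) a <->
  forall m, (m < N)%N ->
    ((i < k.+1)%N -> a (psi (inord i, n, m)) = nth false s m) /\
    ((0 < i)%N -> a (psi (inord i.-1, m, n)) = nth false t m).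
Proof.
have up m : (i < k.+1)%N -> pattern_bit i s t (psi (inord i, n, m)) = nth false s m.
  by move=> ik; rewrite /pattern_bit psiK /= inordK ?eqxx.
have down m : (0 < i)%N -> pattern_bit i s t (psi (inord i.-1, m, n)) = nth false t m.
  move=> i0; have ik : (i.-1 < k.+1)%N by rewrite -ltnS prednK.
  by rewrite /pattern_bit psiK /= inordK // ltn_eqF // ltn_predL.
split=> [agr m mN|bits p /mem_adjacency_bits[m mN [[hi ->]|[hi ->]]]].
  split=> hi; [rewrite -up // | rewrite -down //]; apply: agr;
    by rewrite mem_cat hi map_f ?orbT // mem_iota.
- by rewrite up //; apply: (bits m mN).1.
- by rewrite down //; apply: (bits m mN).2.
Qed.

Lemma extension_event_measurable q : measurable (extension_event q).
Proof.
case: q => [[[i N] s] t].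
have -> : extension_event (i, N, s, t) = \bigcup_(n in [set n | (N <= n)%N])
    agree (pattern_bit i s t) (adjacency_bits i N n).
  by apply/seteqP; split=> a [n]; exists n.
by apply: bigcup_measurable => n _; exact: agree_measurable.
Qed.

Definition coord_bound M := (\max_(p < M) maxn (g p).1.2 (g p).2)%N.

Lemma adjacency_bits_far M i N n : (coord_bound M < n)%N ->
  {in adjacency_bits i N n, forall p, (M <= p)%N}.
Proof.
move=> Mn p /mem_adjacency_bits[m _ pim]; rewrite leqNgt; apply/negP => pM.
have := leq_ltn_trans (@leq_bigmax _ (fun p : 'I_M => maxn (g p).1.2 (g p).2)
  (Ordinal pM)) Mn => /=.
by case: pim => [[_ ->]|[_ ->]]; rewrite psiK /= ltnNge ?leq_maxl ?leq_maxr.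
Qed.

Lemma extension_event_null (R : realType) (P : probability CantorM R) :
  fair_coin P -> forall q, P (~` extension_event q) = 0%E.
Proof.
move=> fairP [[[i N] s] t].
apply: null_of_avoiding_far_patterns (N + N)%N _ _ => //.
  exact: measurableC (extension_event_measurable _).
move=> M; pose n := maxn N (coord_bound M).+1.
exists (pattern_bit i s t), (adjacency_bits i N n); split.
- by rewrite size_cat leq_add //; case: ifP; rewrite ?size_map ?size_iota.
- by apply: adjacency_bits_far; rewrite leq_maxr.
- by apply/seteqP; split=> // a [nE Aa]; apply: nE; exists n; rewrite ?leq_maxl.
Qed.

Lemma S_alphaE (a : cantor_space) (xi yi : 'I_k.+2) (xn yn : nat) :
  (yi : nat) = xi.+1 ->
  S_alpha (l := k.+2) psi a (xi, xn) (yi, yn) <-> a (psi (inord xi, xn, yn)).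
Proof.
move=> yx; have xk : (xi < k.+1)%N by rewrite -ltnS -yx.
split=> [[j [/= xj _ ajxy]]|axy]; last by exists (inord xi); rewrite inordK.
by rewrite (_ : inord xi = j) //; apply: val_inj; rewrite /= inordK.
Qed.

Lemma eq_bool_of_iff (b c : bool) (S : Prop) :
  (S <-> c) -> (b -> S) -> (~~ b -> ~ S) -> c = b.
Proof.
move=> Sc; case: b => [/(_ isT)/Sc ->|_ /(_ isT) nS] //.
by apply/negbTE/negP => /Sc.
Qed.

Lemma Ggen_sub_extension_event q : Ggen (l := k.+2) psi `<=` extension_event q.
Proof.
case: q => [[[i N] s] t] a [_ _ _ ext].
pose near (Q : node -> Prop) := [set x : node | (x.2 < N)%N /\ Q x].
have fin Q : finite_set (near Q).
  apply: (@sub_finite_set _ _ (setT `*` `I_N)); first by move=> [? ?] [].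
  exact: finite_setX finite_finset (finite_II N).
have up Q : near (fun x => (x.1 : nat) = i.+1 /\ Q x) `<=` Lup k.+2 (@Lstd k.+2) i.
  by move=> x [_ [xi _]]; split; [rewrite -xi ltn_ord|].
have down Q : near (fun x => (x.1 : nat).+1 = i /\ Q x) `<=` Ldown (@Lstd k.+2) i.
  by move=> x [_ [<- _]].
have disj (Q : node -> Prop) (b : node -> bool) :
    near (fun x => Q x /\ b x) `&` near (fun x => Q x /\ ~~ b x) = set0.
  by apply/seteqP; split=> // x [[_ [_ bx]] [_ [_]]]; rewrite bx.
have [[zi zn] [/= zii zZ [zX zX'] zY zY']] := ext i (ltn_ord i)
  (near (fun x => (x.1 : nat) = i.+1 /\ nth false s x.2))
  (near (fun x => (x.1 : nat) = i.+1 /\ ~~ nth false s x.2))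
  (near (fun x => (x.1 : nat) = i))
  (near (fun x => (x.1 : nat).+1 = i /\ nth false t x.2))
  (near (fun x => (x.1 : nat).+1 = i /\ ~~ nth false t x.2))
  (fin _) (fin _) (fin _) (fin _) (fin _) (up _) (up _) (disj _ _)
  (fun x => @proj2 _ _) (down _) (down _) (disj _ _).
exists zn; first by rewrite leqNgt; apply/negP => zN; apply: zZ.
apply/agree_adjacency_bitsP => m mN; split=> hi.
  have ik : (i.+1 < k.+2)%N by exact: hi.
  have yz : ((inord i.+1 : 'I_k.+2) : nat) = zi.+1 by rewrite zii inordK.
  rewrite -zii; apply: (eq_bool_of_iff (S_alphaE a zn m yz)) => [sm|nsm];
    [apply: zX|apply: zY]; by rewrite /near /= inordK.
have ik : (i.-1 < k.+2)%N by apply: leq_ltn_trans (leq_pred i) (ltn_ord i).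
have xz : (zi : nat) = ((inord i.-1 : 'I_k.+2) : nat).+1.
  by rewrite zii inordK // prednK.
have := S_alphaE a m zn xz; rewrite inordK // => /eq_bool_of_iff; apply=> [tm|ntm];
  [apply: zX'|apply: zY']; by rewrite /near /= inordK // prednK.
Qed.

Lemma Ggen_of_extension_events (a : CantorM) :
  (forall q, extension_event q a) -> Ggen (l := k.+2) psi a.
Proof.
move=> ev; split.
- by move=> x; exists (x.1 : nat).
- by move=> x i j ij _ [xi xj]; rewrite -xi -xj ltnn in ij.
- by move=> [xi xn] [yi yn] i _ [j [/= xj yj _]]; rewrite /Lstd /= xj yj => ->.
move=> i il X Y Z X' Y' fX fY fZ fX' fY' XU YU XY _ X'D Y'D X'Y'.
have [N bN] : exists N, forall x, (X `|` Y `|` Z `|` X' `|` Y') x -> (x.2 < N)%N.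
  by apply: finite_set_ub; rewrite !finite_setU.
pose s := mkseq (fun m => `[< X (inord i.+1, m) >]) N.
pose t := mkseq (fun m => `[< X' (inord i.-1, m) >]) N.
have [n Nn /agree_adjacency_bitsP bits] := ev (Ordinal il, N, s, t).
have up y : Lup k.+2 (@Lstd k.+2) i y -> (y.2 < N)%N ->
    S_alpha (l := k.+2) psi a (Ordinal il, n) y <-> X y.
  case: y => [yi m] [ik yi1] mN; rewrite /Lstd /= in yi1.
  rewrite (S_alphaE (xi := Ordinal il) a n m yi1) /=.
  by rewrite (bits m mN).1 // nth_mkseq // asboolE -yi1 inord_val.
have down y : Ldown (@Lstd k.+2) i y -> (y.2 < N)%N ->
    S_alpha (l := k.+2) psi a y (Ordinal il, n) <-> X' y.
  case: y => [yi m] [i0 yi1] mN; rewrite /Lstd /= in yi1.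
  rewrite (S_alphaE (yi := Ordinal il) a m n) /= ?yi1 ?prednK //.
  by rewrite (bits m mN).2 // nth_mkseq // asboolE -yi1 inord_val.
exists (Ordinal il, n); split => //.
- move=> Zn; have := bN _ (or_introl (or_introl (or_intror Zn))).
  by rewrite ltnNge Nn.
- split=> x Xx.
    by apply/up => //; [exact: XU|apply: bN; left; left; left; left].
  by apply/down => //; [exact: X'D|apply: bN; left; right].
- move=> y Yy Sy; have yN : (y.2 < N)%N by apply: bN; left; left; left; right.
  have Xy : X y by apply/(up y (YU y Yy) yN).
  by have : (X `&` Y) y by []; rewrite XY.
- move=> y Yy Sy; have yN : (y.2 < N)%N by apply: bN; right.
  have X'y : X' y by apply/(down y (Y'D y Yy) yN).
  by have : (X' `&` Y') y by []; rewrite X'Y'.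
Qed.

Lemma Ggen_eq_bigcap : Ggen (l := k.+2) psi = \bigcap_q extension_event q.
Proof.
apply/seteqP; split=> [a Ga q _|a evs]; first exact: Ggen_sub_extension_event.
by apply: Ggen_of_extension_events => q; exact: evs.
Qed.

End diagram.

Theorem lemma3 (l : nat) (hl : (2 <= l)%N)
  (psi : 'I_l.-1 * nat * nat -> nat) (hpsi : bijective psi)
  (R : realType) (P : probability CantorM R) (hP : fair_coin P) :
  measurable (Ggen psi) /\ P (Ggen psi) = 1%E.
Proof.
case: l hl psi hpsi => [|[|k]] // _ psi [g psiK _].
rewrite (Ggen_eq_bigcap psiK); split.
  exact: countable_bigcapT_measurable extension_event_measurable.
apply: probability_countable_bigcap extension_event_measurable _.
move=> q; exact: (extension_event_null psiK hP q).
Qed.
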